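(* Let $X_1,X_2,\dots$ be iid real random variables with common continuous distribution function $F$ having a (Lebesgue) density $f$. For integers $1\le j<k$ let $g_{j,k}$ be the density of $G_{j,k}(x):=\Pr(X_j\le x\mid X_j\text{ and }X_k\text{ are records})$, namely $g_{j,k}(x)=\frac{jk}{k-j}f(x)\left(F^{j-1}(x)-F^{k-1}(x)\right)$, and let $g_j$ be the density of $G_j(x):=\Pr(X_j\le x\mid X_j\text{ is a record})$, namely $g_j(x)=jf(x)F^{j-1}(x)$. Then \[ D_{KL}(g_{j,k},g_j)=\frac{j}{k}. \]
   Context: $X_m$ is a record if $X_m>\max(X_1,\dots,X_{m-1})$; $X_1$ is always a record. For densities $p,q$ the Kullback–Leibler divergence is $D_{KL}(p\|q)=\int_{-\infty}^{\infty}p(x)\log\frac{p(x)}{q(x)}\,dx$, and the Kullback–Leibler distance is $D_{KL}(p,q)=D_{KL}(p\|q)+D_{KL}(q\|p)$. *)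

(* Lebesgue integrals over R are rendered by
   the Henstock--Kurzweil (gauge) integral, which is elementary to define and
   agrees with the Lebesgue integral on Lebesgue-integrable functions. *)
From Stdlib Require Import Reals Lra List.
Import ListNotations.
Open Scope R_scope.

(* A tagged partition of [x, b] is a list of (tag, right endpoint) pairs;
   [tagged_fine delta x b l] says l is a delta-fine tagged partition of [x,b]:
   consecutive points x = x0 < x1 < ... < xn = b, tags t_i in [x_{i-1}, x_i],
   and [x_{i-1}, x_i] is contained in (t_i - delta t_i, t_i + delta t_i). *)
Fixpoint tagged_fine (delta : R -> R) (x b : R) (l : list (R * R)) : Prop :=
  match l with
  | nil => x = b
  | (t, y) :: l' =>
      x < y /\ x <= t <= y /\ t - delta t < x /\ y < t + delta t /\
      tagged_fine delta y b l'
  end.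

Fixpoint rsum (f : R -> R) (x : R) (l : list (R * R)) : R :=
  match l with
  | nil => 0
  | (t, y) :: l' => f t * (y - x) + rsum f y l'
  end.

Definition HK_int (f : R -> R) (a b I : R) : Prop :=
  forall eps, 0 < eps ->
    exists delta : R -> R, (forall t, 0 < delta t) /\
      forall l, tagged_fine delta a b l -> Rabs (rsum f a l - I) < eps.

(* Integral over (-oo, x]  (improper limit, Hake's theorem). *)
Definition HK_int_to (f : R -> R) (x I : R) : Prop :=
  (forall a, a <= x -> exists J, HK_int f a x J) /\
  forall eps, 0 < eps -> exists M, forall a J,
      a <= - M -> HK_int f a x J -> Rabs (J - I) < eps.

Definition HK_int_R (f : R -> R) (I : R) : Prop :=
  (forall a b, a <= b -> exists J, HK_int f a b J) /\
  forall eps, 0 < eps -> exists M, forall a b J,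
      a <= - M -> M <= b -> HK_int f a b J -> Rabs (J - I) < eps.

Definition is_density_of (f F : R -> R) : Prop :=
  (forall x, 0 <= f x) /\ (forall x, HK_int_to f x (F x)) /\ HK_int_R f 1.

Definition kl_integrand (p q : R -> R) (x : R) : R :=
  if Req_dec_T (p x) 0 then 0 else p x * ln (p x / q x).

Definition KL_div (p q : R -> R) (d : R) : Prop := HK_int_R (kl_integrand p q) d.

Definition KL_dist (p q : R -> R) (d : R) : Prop :=
  exists d1 d2, KL_div p q d1 /\ KL_div q p d2 /\ d = d1 + d2.

Definition g_jk (f F : R -> R) (j k : nat) (x : R) : R :=
  (INR j * INR k / (INR k - INR j)) * f x * (F x ^ (j - 1) - F x ^ (k - 1)).

Definition g_j (f F : R -> R) (j : nat) (x : R) : R :=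
  INR j * f x * F x ^ (j - 1).

(* Both Kullback-Leibler integrands have the form [f x * phi (F x)], where [phi]
   depends only on [j] and [k] and vanishes at 1, so substituting [u = F x]
   turns each divergence into [Phi 1 - Phi 0] for a primitive [Phi] of [phi].
   For the gauge integral this change of variables is proved directly: on a
   fine partition, the Riemann sum of [f * (phi o F)] minus the telescoping sum
   of [Phi o F] splits into [sum phi (F t) * (f t * dx - dF)], bounded by a
   Saks-Henstock lemma weighted by [|phi (F t)|] (for D(g_j || g_jk), [phi] is
   unbounded near 1), and [sum (phi (F t) * dF - d (Phi o F))], bounded by the
   mean value theorem and continuity of [phi]. *)

From Stdlib Require Import Reals Lra Lia List IndefiniteDescription
  FunctionalExtensionality Classical_Prop.
From Coquelicot Require Import Coquelicot.
Import ListNotations.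
Open Scope R_scope.

Fixpoint cell_sum (g : R -> R -> R -> R) (x : R) (l : list (R * R)) : R :=
  match l with
  | nil => 0
  | (t, y) :: l' => g x t y + cell_sum g y l'
  end.

Fixpoint tagged_chain (P : R -> R -> R -> Prop) (x b : R) (l : list (R * R))
  : Prop :=
  match l with
  | nil => x = b
  | (t, y) :: l' => x < y /\ x <= t <= y /\ P x t y /\ tagged_chain P y b l'
  end.

Definition fine_cell (d : R -> R) (x t y : R) : Prop :=
  t - d t < x /\ y < t + d t.

Lemma tagged_fine_chain d x b l :
  tagged_fine d x b l <-> tagged_chain (fine_cell d) x b l.
Proof.
  revert x; induction l as [|[t y] l IH]; intros x; simpl; [tauto|].
  rewrite IH; unfold fine_cell; tauto.
Qed.

Lemma rsum_cell_sum f x l :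
  rsum f x l = cell_sum (fun x t y => f t * (y - x)) x l.
Proof. revert x; induction l as [|[t y] l IH]; intros x; simpl; rewrite ?IH; auto. Qed.

Lemma tagged_chain_impl (P Q : R -> R -> R -> Prop) x b l :
  (forall x t y, x < y -> x <= t <= y -> P x t y -> Q x t y) ->
  tagged_chain P x b l -> tagged_chain Q x b l.
Proof.
  intros HPQ; revert x; induction l as [|[t y] l IH]; intros x; simpl; auto.
  intros (? & ? & ? & ?); auto.
Qed.

Lemma tagged_chain_app P x y z l1 l2 :
  tagged_chain P x y l1 -> tagged_chain P y z l2 -> tagged_chain P x z (l1 ++ l2).
Proof.
  revert x; induction l1 as [|[t w] l IH]; intros x; simpl.
  - intros ->; auto.
  - intros (? & ? & ? & ?) ?; auto.
Qed.

Lemma tagged_fine_mono (d1 d2 : R -> R) x b l :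
  (forall t, d1 t <= d2 t) -> tagged_fine d1 x b l -> tagged_fine d2 x b l.
Proof.
  intros Hd; rewrite !tagged_fine_chain; apply tagged_chain_impl.
  intros x' t y _ _ [? ?]; specialize (Hd t); split; lra.
Qed.

Lemma cell_sum_app P g x y l1 l2 : tagged_chain P x y l1 ->
  cell_sum g x (l1 ++ l2) = cell_sum g x l1 + cell_sum g y l2.
Proof.
  revert x; induction l1 as [|[t w] l IH]; intros x; simpl.
  - intros ->; lra.
  - intros (_ & _ & _ & Hl); rewrite (IH _ Hl); lra.
Qed.

Lemma cell_sum_telescope P (G : R -> R) x b l : tagged_chain P x b l ->
  cell_sum (fun x _ y => G y - G x) x l = G b - G x.
Proof.
  revert x; induction l as [|[t y] l IH]; intros x; simpl.
  - intros ->; lra.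
  - intros (_ & _ & _ & Hl); rewrite (IH _ Hl); lra.
Qed.

Lemma cell_sum0 x l : cell_sum (fun _ _ _ => 0) x l = 0.
Proof. revert x; induction l as [|[t y] l IH]; intros x; simpl; rewrite ?IH; lra. Qed.

Lemma cell_sumD g1 g2 x l :
  cell_sum (fun x t y => g1 x t y + g2 x t y) x l = cell_sum g1 x l + cell_sum g2 x l.
Proof. revert x; induction l as [|[t y] l IH]; intros x; simpl; rewrite ?IH; lra. Qed.

Lemma cell_sumB g1 g2 x l :
  cell_sum (fun x t y => g1 x t y - g2 x t y) x l = cell_sum g1 x l - cell_sum g2 x l.
Proof. revert x; induction l as [|[t y] l IH]; intros x; simpl; rewrite ?IH; lra. Qed.

Lemma cell_sumZ c g x l :
  cell_sum (fun x t y => c * g x t y) x l = c * cell_sum g x l.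
Proof. revert x; induction l as [|[t y] l IH]; intros x; simpl; rewrite ?IH; lra. Qed.

Lemma cell_sum_le P g1 g2 x b l : tagged_chain P x b l ->
  (forall x t y, x < y -> x <= t <= y -> P x t y -> g1 x t y <= g2 x t y) ->
  cell_sum g1 x l <= cell_sum g2 x l.
Proof.
  intros Hl H; revert x Hl; induction l as [|[t y] l IH]; intros x; simpl; [lra|].
  intros (Hxy & Ht & HP & Hl); specialize (IH _ Hl); specialize (H x t y Hxy Ht HP); lra.
Qed.

Lemma cell_sum_le_tags (P : R -> Prop) g1 g2 x l : List.Forall (fun p => P (fst p)) l ->
  (forall x t y, P t -> g1 x t y <= g2 x t y) ->
  cell_sum g1 x l <= cell_sum g2 x l.
Proof.
  intros Hl H; revert x; induction Hl as [|[t y] l Ht Hl IH]; intros x; simpl; [lra|].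
  specialize (IH y); specialize (H x t y Ht); lra.
Qed.

Lemma cell_sum_ext P g1 g2 x b l : tagged_chain P x b l ->
  (forall x t y, x < y -> x <= t <= y -> P x t y -> g1 x t y = g2 x t y) ->
  cell_sum g1 x l = cell_sum g2 x l.
Proof.
  intros Hl H; revert x Hl; induction l as [|[t y] l IH]; intros x; simpl; auto.
  intros (? & ? & ? & Hl); rewrite (IH _ Hl), H; auto.
Qed.

Lemma cell_sum_abs g x l :
  Rabs (cell_sum g x l) <= cell_sum (fun x t y => Rabs (g x t y)) x l.
Proof.
  revert x; induction l as [|[t y] l IH]; intros x; simpl.
  - rewrite Rabs_R0; lra.
  - specialize (IH y); pose proof (Rabs_triang (g x t y) (cell_sum g y l)); lra.
Qed.

Lemma rsum_nonneg f d x b l :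
  (forall t, 0 <= f t) -> tagged_fine d x b l -> 0 <= rsum f x l.
Proof.
  intros Hf Hl; rewrite rsum_cell_sum, <- (cell_sum0 x l).
  apply tagged_fine_chain in Hl; apply (cell_sum_le _ _ _ _ _ _ Hl).
  intros x' t y ? _ _; specialize (Hf t); nra.
Qed.

Lemma Rabs_triang_minus a b : Rabs (a - b) <= Rabs a + Rabs b.
Proof. unfold Rminus; rewrite <- (Rabs_Ropp b); apply Rabs_triang. Qed.

Lemma Rabs_lt_all_eq0 z : (forall eps, 0 < eps -> Rabs z < eps) -> z = 0.
Proof.
  intros H; destruct (Req_dec z 0) as [|Hz]; auto.
  specialize (H (Rabs z) (Rabs_pos_lt _ Hz)); lra.
Qed.

Lemma cousin d : (forall t, 0 < d t) ->
  forall a b, a <= b -> exists l, tagged_fine d a b l.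
Proof.
  intros Hd a b Hab.
  set (E := fun y => a <= y <= b /\ exists l, tagged_fine d a y l).
  assert (HaE : E a) by (split; [lra | exists nil; reflexivity]).
  destruct (completeness E) as [s [Hub Hlub]];
    [exists b; intros y [? _]; lra | exists a; exact HaE |].
  assert (Has : a <= s) by (apply Hub, HaE).
  assert (Hsb : s <= b) by (apply Hlub; intros y [? _]; lra).
  assert (Hy : exists y, E y /\ s - d s < y).
  { apply NNPP; intros Hn.
    enough (s <= s - d s) by (specialize (Hd s); lra).
    apply Hlub; intros y Ey; apply Rnot_lt_le; intros ?; eauto. }
  destruct Hy as [y [[Hy [l Hl]] Hys']].
  assert (Hys : y <= s) by (apply Hub; split; eauto).
  pose proof (Hd s); pose proof (Rmin_l b (s + d s / 2));
    pose proof (Rmin_r b (s + d s / 2)).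
  set (s' := Rmin b (s + d s / 2)) in *.
  assert (Hss' : s <= s') by (apply Rmin_glb; lra).
  assert (Hs'b : s' = b \/ s' = s + d s / 2)
    by (unfold s', Rmin; destruct Rle_dec; auto).
  destruct (Rlt_dec y s') as [Hys''|Hys''].
  - assert (Hl' : tagged_fine d a s' (l ++ [(s, s')])).
    { apply tagged_fine_chain, tagged_chain_app with y;
        [apply tagged_fine_chain; exact Hl |].
      simpl; unfold fine_cell; repeat split; lra. }
    destruct Hs'b as [Hb|Hs'']; [rewrite <- Hb; eauto|].
    enough (s' <= s) by lra.
    apply Hub; split; [lra | eauto].
  - assert (y = b) as <- by (destruct Hs'b; lra). eauto.
Qed.

Lemma HK_unique f a b I1 I2 :
  a <= b -> HK_int f a b I1 -> HK_int f a b I2 -> I1 = I2.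
Proof.
  intros Hab H1 H2; apply Rminus_diag_uniq, Rabs_lt_all_eq0; intros eps Heps.
  destruct (H1 (eps / 2)) as [d1 [Hd1 P1]]; [lra|].
  destruct (H2 (eps / 2)) as [d2 [Hd2 P2]]; [lra|].
  destruct (cousin (fun t => Rmin (d1 t) (d2 t))) with a b as [l Hl];
    [intros t; apply Rmin_glb_lt; auto | exact Hab |].
  specialize (P1 l (tagged_fine_mono _ _ _ _ _ (fun t => Rmin_l _ _) Hl)).
  specialize (P2 l (tagged_fine_mono _ _ _ _ _ (fun t => Rmin_r _ _) Hl)).
  replace (I1 - I2) with ((rsum f a l - I2) - (rsum f a l - I1)) by ring.
  pose proof (Rabs_triang_minus (rsum f a l - I2) (rsum f a l - I1)); lra.
Qed.

Lemma HK_additive f a x y J1 J2 J : a <= x -> x <= y ->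
  HK_int f a x J1 -> HK_int f x y J2 -> HK_int f a y J -> J = J1 + J2.
Proof.
  intros Hax Hxy H1 H2 H; apply Rminus_diag_uniq, Rabs_lt_all_eq0; intros eps Heps.
  destruct (H1 (eps / 3)) as [d1 [Hd1 P1]]; [lra|].
  destruct (H2 (eps / 3)) as [d2 [Hd2 P2]]; [lra|].
  destruct (H (eps / 3)) as [d [Hd P]]; [lra|].
  destruct (cousin (fun t => Rmin (d t) (d1 t))) with a x as [l1 L1];
    [intros t; apply Rmin_glb_lt; auto | exact Hax |].
  destruct (cousin (fun t => Rmin (d t) (d2 t))) with x y as [l2 L2];
    [intros t; apply Rmin_glb_lt; auto | exact Hxy |].
  specialize (P1 l1 (tagged_fine_mono _ _ _ _ _ (fun t => Rmin_r _ _) L1)).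
  specialize (P2 l2 (tagged_fine_mono _ _ _ _ _ (fun t => Rmin_r _ _) L2)).
  apply (tagged_fine_mono _ d) in L1, L2; try (intros; apply Rmin_l).
  rewrite tagged_fine_chain in L1, L2.
  specialize (P (l1 ++ l2) (proj2 (tagged_fine_chain _ _ _ _)
                            (tagged_chain_app _ _ _ _ _ _ L1 L2))).
  rewrite !rsum_cell_sum, (cell_sum_app _ _ _ _ _ _ L1) in *.
  set (r1 := cell_sum _ a l1) in *; set (r2 := cell_sum _ x l2) in *.
  replace (J - (J1 + J2)) with ((r1 - J1) + (r2 - J2) - (r1 + r2 - J)) by ring.
  pose proof (Rabs_triang_minus ((r1 - J1) + (r2 - J2)) (r1 + r2 - J)).
  pose proof (Rabs_triang (r1 - J1) (r2 - J2)); lra.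
Qed.

Lemma HK_nonneg f a b J :
  (forall t, 0 <= f t) -> a <= b -> HK_int f a b J -> 0 <= J.
Proof.
  intros Hf Hab H; apply Rnot_lt_le; intros HJ.
  destruct (H (- J)) as [d [Hd P]]; [lra|].
  destruct (cousin d Hd a b Hab) as [l Hl].
  specialize (P l Hl); pose proof (rsum_nonneg f d a b l Hf Hl).
  apply Rabs_def2 in P; lra.
Qed.

Definition cell_defect (f F : R -> R) (x t y : R) : R :=
  f t * (y - x) - (F y - F x).

Definition selected_defect (f F : R -> R) (sel : R -> R -> R -> bool) (x t y : R)
  : R := if sel x t y then cell_defect f F x t y else 0.

Fixpoint gauge_min (d : nat -> R -> R) (n : nat) (t : R) : R :=
  match n with
  | O => d O t
  | S n' => Rmin (d n t) (gauge_min d n' t)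
  end.

Lemma gauge_min_pos d n t : (forall m, 0 < d m t) -> 0 < gauge_min d n t.
Proof. intros Hd; induction n; simpl; auto using Rmin_glb_lt. Qed.

Lemma gauge_min_le d n m t : (m <= n)%nat -> gauge_min d n t <= d m t.
Proof.
  induction n; intros Hm; simpl.
  - replace m with O by lia; lra.
  - destruct (Nat.eq_dec m (S n)) as [->|Hne]; [apply Rmin_l|].
    eapply Rle_trans; [apply Rmin_r | apply IHn; lia].
Qed.

Section SaksHenstock.

Variables f F : R -> R.
Hypothesis HF : forall x y, x <= y -> HK_int f x y (F y - F x).

(* Each unselected cell is replaced by a fine partition of it whose Riemann sum
   is within [eta] of the increment of [F]. *)
Lemma fine_completion d (Hd : forall t, 0 < d t) sel eta (Heta : 0 < eta) b :
  forall l x,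
  tagged_chain (fun x t y => sel x t y = true -> fine_cell d x t y) x b l ->
  exists Q, tagged_fine d x b Q /\
    Rabs (rsum f x Q - (F b - F x) - cell_sum (selected_defect f F sel) x l)
      <= INR (length l) * eta.
Proof.
  induction l as [|[t y] l IH]; intros x Hl.
  - simpl in Hl; subst; exists nil; simpl; split; [reflexivity|].
    replace (0 - (F b - F b) - 0) with 0 by ring; rewrite Rabs_R0; lra.
  - destruct Hl as (Hxy & Ht & Hsel & Hl).
    destruct (IH y Hl) as [Q [HQ HQe]].
    change (length ((t, y) :: l)) with (S (length l)); rewrite S_INR.
    pose proof (pos_INR (length l)).
    simpl cell_sum; unfold selected_defect at 1.
    set (S' := cell_sum (selected_defect f F sel) y l) in *.
    destruct (sel x t y).
    + exists ((t, y) :: Q); split.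
      * destruct (Hsel eq_refl); simpl; repeat split; auto; lra.
      * simpl rsum; unfold cell_defect.
        replace (f t * (y - x) + rsum f y Q - (F b - F x)
                 - (f t * (y - x) - (F y - F x) + S'))
          with (rsum f y Q - (F b - F y) - S') by ring; lra.
    + destruct (HF x y ltac:(lra) eta Heta) as [dR [HdR PR]].
      destruct (cousin (fun t => Rmin (d t) (dR t))) with x y as [P HP];
        [intros; apply Rmin_glb_lt; auto | lra |].
      specialize (PR P (tagged_fine_mono _ _ _ _ _ (fun t => Rmin_r _ _) HP)).
      apply (tagged_fine_mono _ d) in HP; [|intros; apply Rmin_l].
      exists (P ++ Q); split.
      * apply tagged_fine_chain in HP, HQ; apply tagged_fine_chain.
        exact (tagged_chain_app _ _ _ _ _ _ HP HQ).
      * rewrite !rsum_cell_sum in *; apply tagged_fine_chain in HP.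
        rewrite (cell_sum_app _ _ _ _ _ _ HP).
        set (rP := cell_sum _ x P) in *; set (rQ := cell_sum _ y Q) in *.
        replace (rP + rQ - (F b - F x) - (0 + S'))
          with ((rP - (F y - F x)) + (rQ - (F b - F y) - S')) by ring.
        pose proof (Rabs_triang (rP - (F y - F x)) (rQ - (F b - F y) - S')); lra.
Qed.

Section FixedGauge.

Variables (a b : R) (d : R -> R) (eps : R).
Hypothesis Hd : forall t, 0 < d t.
Hypothesis Hacc :
  forall l, tagged_fine d a b l -> Rabs (rsum f a l - (F b - F a)) < eps.

Lemma saks_henstock sel l :
  tagged_chain (fun x t y => sel x t y = true -> fine_cell d x t y) a b l ->
  Rabs (cell_sum (selected_defect f F sel) a l) <= eps.
Proof.
  intros Hl; apply Rle_plus_epsilon; intros e He.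
  set (L := INR (length l)); assert (HL : 0 <= L) by apply pos_INR.
  destruct (fine_completion d Hd sel (e / (L + 1))) with b l a as [Q [HQ HQe]];
    [apply Rdiv_lt_0_compat; lra | exact Hl |].
  assert (L * (e / (L + 1)) <= e).
  { apply Rmult_le_reg_r with (L + 1); [lra|].
    field_simplify; [nra | lra]. }
  specialize (Hacc Q HQ); fold L in HQe.
  set (S := cell_sum _ a l) in *.
  replace S with ((rsum f a Q - (F b - F a)) - (rsum f a Q - (F b - F a) - S))
    by ring.
  pose proof (Rabs_triang_minus (rsum f a Q - (F b - F a))
                                (rsum f a Q - (F b - F a) - S)); lra.
Qed.

Lemma saks_henstock_abs sel l :
  tagged_chain (fun x t y => sel x t y = true -> fine_cell d x t y) a b l ->
  cell_sum (fun x t y => if sel x t y then Rabs (cell_defect f F x t y) else 0) a l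
    <= 2 * eps.
Proof.
  intros Hl.
  set (pos x t y := if Rle_dec 0 (cell_defect f F x t y) then sel x t y else false).
  set (neg x t y := if Rle_dec 0 (cell_defect f F x t y) then false else sel x t y).
  assert (Hsub : forall s, (forall x t y, s x t y = true -> sel x t y = true) ->
    tagged_chain (fun x t y => s x t y = true -> fine_cell d x t y) a b l).
  { intros s Hs; refine (tagged_chain_impl _ _ _ _ _ _ Hl).
    intros x t y _ _ H h; exact (H (Hs x t y h)). }
  assert (Hpos := saks_henstock pos l
    (Hsub pos (fun x t y => ltac:(unfold pos; destruct Rle_dec; congruence)))).
  assert (Hneg := saks_henstock neg l
    (Hsub neg (fun x t y => ltac:(unfold neg; destruct Rle_dec; congruence)))).
  rewrite (cell_sum_ext _ _
    (fun x t y => selected_defect f F pos x t y - selected_defect f F neg x t y)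
    _ _ _ Hl).
  - rewrite cell_sumB.
    pose proof (Rabs_triang_minus (cell_sum (selected_defect f F pos) a l)
                                  (cell_sum (selected_defect f F neg) a l)).
    apply Rle_trans with (1 := Rle_abs _); lra.
  - intros x t y _ _ _; unfold selected_defect, pos, neg.
    destruct (sel x t y), Rle_dec; try lra.
    + rewrite Rabs_right; lra.
    + rewrite Rabs_left; lra.
Qed.

Lemma saks_henstock_cell x t y : a < x -> x < y -> x <= t <= y -> y < b ->
  fine_cell d x t y -> Rabs (cell_defect f F x t y) <= eps.
Proof.
  intros Hax Hxy Ht Hyb Hfine.
  set (sel x' (_ _ : R) := if Req_dec_T x' x then true else false).
  assert (Hl : tagged_chain (fun x t y => sel x t y = true -> fine_cell d x t y)
                 a b [(a, x); (t, y); (y, b)]).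
  { unfold sel; simpl; destruct Hfine.
    destruct (Req_dec_T a x), (Req_dec_T x x), (Req_dec_T y x); try lra.
    repeat split; try lra; discriminate. }
  pose proof (saks_henstock sel _ Hl) as H; unfold sel, selected_defect in H; simpl in H.
  destruct (Req_dec_T a x), (Req_dec_T x x), (Req_dec_T y x); try lra.
  now rewrite Rplus_0_l, !Rplus_0_r in H.
Qed.

End FixedGauge.

(* The cells whose tag has level [N t >= m] are fine for the gauge of accuracy
   [e0 / 2 ^ m], so they contribute at most [2 e0 / 2 ^ m]; summing over the
   levels bounds the sum weighted by [N]. *)
Lemma saks_henstock_levels a b e0 (dm : nat -> R -> R) (N : R -> nat) l :
  (forall m t, 0 < dm m t) ->
  (forall m Q, tagged_fine (dm m) a b Q ->
     Rabs (rsum f a Q - (F b - F a)) < e0 / 2 ^ m) ->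
  tagged_fine (fun t => gauge_min dm (N t) t) a b l ->
  forall M,
    cell_sum (fun x t y => INR (Nat.min (N t) M) * Rabs (cell_defect f F x t y)) a l
    <= 2 * e0 * (1 - / 2 ^ M).
Proof.
  intros Hdm Hacc Hl; apply tagged_fine_chain in Hl.
  induction M as [|M IH].
  - rewrite (cell_sum_ext _ _ (fun _ _ _ => 0) _ _ _ Hl), cell_sum0.
    + simpl; lra.
    + intros; rewrite Nat.min_0_r; simpl; ring.
  - rewrite (cell_sum_ext _ _ (fun x t y =>
        INR (Nat.min (N t) M) * Rabs (cell_defect f F x t y)
        + (if (S M <=? N t)%nat then Rabs (cell_defect f F x t y) else 0)) _ _ _ Hl).
    + rewrite cell_sumD.
      assert (Hlevel : cell_sum (fun x t y => if (S M <=? N t)%nat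
                         then Rabs (cell_defect f F x t y) else 0) a l
                       <= 2 * (e0 / 2 ^ S M)).
      { apply (saks_henstock_abs a b (dm (S M)) _ (Hdm (S M)) (Hacc (S M))).
        refine (tagged_chain_impl _ _ _ _ _ _ Hl).
        intros x t y _ _ [H1 H2] E; apply Nat.leb_le in E.
        pose proof (gauge_min_le dm (N t) (S M) t E); unfold fine_cell; lra. }
      replace (/ 2 ^ S M) with (/ 2 * / 2 ^ M) by (simpl; rewrite Rinv_mult; auto).
      unfold Rdiv in Hlevel; simpl pow in Hlevel; rewrite Rinv_mult in Hlevel; lra.
    + intros x t y _ _ _; destruct (S M <=? N t)%nat eqn:E.
      * apply Nat.leb_le in E; rewrite !Nat.min_r by lia; rewrite S_INR; ring.
      * apply Nat.leb_nle in E; rewrite !Nat.min_l by lia; ring.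
Qed.

Lemma saks_henstock_weighted (w : R -> R) a b e0 : a <= b -> 0 < e0 ->
  exists d, (forall t, 0 < d t) /\ forall l, tagged_fine d a b l ->
    cell_sum (fun x t y => Rabs (w t) * Rabs (cell_defect f F x t y)) a l <= 2 * e0.
Proof.
  intros Hab He0.
  destruct (functional_choice (fun m d => (forall t, 0 < d t) /\
    forall Q, tagged_fine d a b Q -> Rabs (rsum f a Q - (F b - F a)) < e0 / 2 ^ m))
    as [dm Hdm].
  { intros m; apply (HF a b Hab), Rdiv_lt_0_compat, pow_lt; lra. }
  destruct (functional_choice (fun t n => Rabs (w t) <= INR n)) as [N HN].
  { intros t; destruct (INR_unbounded (Rabs (w t))) as [n Hn]; exists n; lra. }
  exists (fun t => gauge_min dm (N t) t); split.
  { intros t; apply gauge_min_pos; intros m; apply Hdm. }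
  intros l Hl.
  set (M := list_max (map (fun p => N (fst p)) l)).
  assert (HM : List.Forall (fun p => (N (fst p) <= M)%nat) l).
  { apply (List.Forall_map (fun p => N (fst p)) (fun n => (n <= M)%nat)).
    apply list_max_le, Nat.le_refl. }
  pose proof (saks_henstock_levels a b e0 dm N l (fun m => proj1 (Hdm m))
                (fun m => proj2 (Hdm m)) Hl M).
  assert (0 < / 2 ^ M) by (apply Rinv_0_lt_compat, pow_lt; lra).
  enough (cell_sum (fun x t y => Rabs (w t) * Rabs (cell_defect f F x t y)) a l
          <= cell_sum (fun x t y => INR (Nat.min (N t) M)
                                    * Rabs (cell_defect f F x t y)) a l) by nra.
  apply (cell_sum_le_tags (fun t => (N t <= M)%nat) _ _ _ _ HM).
  intros x t y Ht; rewrite Nat.min_l by exact Ht.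
  apply Rmult_le_compat_r; [apply Rabs_pos | apply HN].
Qed.

End SaksHenstock.

Lemma continuity_pt_eps g x : continuity_pt g x <->
  forall e, 0 < e -> exists r, 0 < r /\
    forall z, Rabs (z - x) < r -> Rabs (g z - g x) < e.
Proof.
  unfold continuity_pt, continue_in, limit1_in, limit_in; simpl; unfold R_dist.
  split; intros H e He; destruct (H e He) as [r [Hr Hz]]; exists r; split; auto.
  - intros z Hzx; destruct (Req_dec z x) as [->|Hne].
    + rewrite Rminus_eq_0, Rabs_R0; exact He.
    + apply Hz; repeat split; auto.
  - intros z [_ Hzx]; auto.
Qed.

Section Density.

Variables f F : R -> R.
Hypothesis Hd : is_density_of f F.

Lemma density_primitive x y : x <= y -> HK_int f x y (F y - F x).
Proof.
  destruct Hd as [_ [Hto HR]]; intros Hxy.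
  destruct (proj1 HR x y Hxy) as [J HJ].
  replace (F y - F x) with J; [exact HJ|].
  symmetry; apply Rminus_diag_uniq, Rabs_lt_all_eq0; intros eps Heps.
  destruct (proj2 (Hto x) (eps / 2)) as [M1 HM1]; [lra|].
  destruct (proj2 (Hto y) (eps / 2)) as [M2 HM2]; [lra|].
  set (a := Rmin x (Rmin (- M1) (- M2))).
  assert (Hax : a <= x) by apply Rmin_l.
  assert (Ha1 : a <= - M1) by (eapply Rle_trans; [apply Rmin_r | apply Rmin_l]).
  assert (Ha2 : a <= - M2) by (eapply Rle_trans; [apply Rmin_r | apply Rmin_r]).
  destruct (proj1 (Hto x) a Hax) as [Jx HJx].
  destruct (proj1 (Hto y) a ltac:(lra)) as [Jy HJy].
  pose proof (HK_additive f a x y Jx J Jy Hax Hxy HJx HJ HJy).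
  specialize (HM1 a Jx Ha1 HJx); specialize (HM2 a Jy Ha2 HJy).
  rewrite Rabs_minus_sym in HM1, HM2.
  replace (F y - F x - J) with ((F y - Jy) - (F x - Jx)) by lra.
  pose proof (Rabs_triang_minus (F y - Jy) (F x - Jx)); lra.
Qed.

Lemma density_mono x y : x <= y -> F x <= F y.
Proof.
  intros Hxy; pose proof (HK_nonneg f x y _ (proj1 Hd) Hxy (density_primitive x y Hxy)).
  lra.
Qed.

Lemma density_ge0 x : 0 <= F x.
Proof.
  destruct Hd as [Hf [Hto _]].
  apply Rle_plus_epsilon; intros eps Heps.
  destruct (proj2 (Hto x) eps Heps) as [M HM].
  destruct (proj1 (Hto x) (Rmin x (- M)) (Rmin_l _ _)) as [J HJ].
  specialize (HM _ J (Rmin_r _ _) HJ).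
  pose proof (HK_nonneg f _ x J Hf (Rmin_l _ _) HJ).
  apply Rabs_def2 in HM; lra.
Qed.

Lemma density_le1 x : F x <= 1.
Proof.
  destruct Hd as [_ [Hto HR]].
  apply Rle_plus_epsilon; intros eps Heps.
  destruct (proj2 HR (eps / 2)) as [M HM]; [lra|].
  destruct (proj2 (Hto x) (eps / 2)) as [M1 HM1]; [lra|].
  set (a := Rmin x (Rmin (- M) (- M1))); set (b := Rmax x M).
  assert (Hax : a <= x) by apply Rmin_l.
  assert (Ha : a <= - M) by (eapply Rle_trans; [apply Rmin_r | apply Rmin_l]).
  assert (Ha1 : a <= - M1) by (eapply Rle_trans; [apply Rmin_r | apply Rmin_r]).
  assert (Hxb : x <= b) by apply Rmax_l.
  specialize (HM a b _ Ha (Rmax_r _ _) (density_primitive a b ltac:(lra))).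
  specialize (HM1 a _ Ha1 (density_primitive a x Hax)).
  pose proof (density_mono x b Hxb).
  apply Rabs_def2 in HM; apply Rabs_def2 in HM1; lra.
Qed.

Lemma density_tails rho : 0 < rho -> exists M, 0 <= M /\
  (forall b, M <= b -> 1 - rho < F b) /\ (forall a, a <= - M -> F a < rho).
Proof.
  destruct Hd as [_ [Hto HR]]; intros Hrho.
  destruct (proj2 HR (rho / 2)) as [M0 HM0]; [lra|].
  pose proof (Rmax_l M0 0); pose proof (Rmax_r M0 0).
  set (M := Rmax M0 0) in *.
  exists M; split; [lra | split].
  - intros b Hb.
    destruct (proj2 (Hto b) (rho / 2)) as [Mb HMb]; [lra|].
    set (a := Rmin (- M) (- Mb)).
    pose proof (Rmin_l (- M) (- Mb)); pose proof (Rmin_r (- M) (- Mb)).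
    destruct (proj1 (Hto b) a ltac:(unfold a; lra)) as [J HJ].
    specialize (HMb a J ltac:(unfold a; lra) HJ).
    specialize (HM0 a b J ltac:(unfold a; lra) ltac:(lra) HJ).
    apply Rabs_def2 in HMb; apply Rabs_def2 in HM0; lra.
  - intros a Ha.
    specialize (HM0 a M _ ltac:(lra) ltac:(lra) (density_primitive a M ltac:(lra))).
    pose proof (density_le1 M); apply Rabs_def2 in HM0; lra.
Qed.

Lemma density_continuous t : continuity_pt F t.
Proof.
  apply continuity_pt_eps; intros rho Hrho.
  destruct (density_primitive (t - 1) (t + 1) ltac:(lra) (rho / 2))
    as [d [Hdpos Hacc]]; [lra|].
  pose proof (proj1 Hd t) as Hft; pose proof (Hdpos t).
  set (eta := Rmin 1 (Rmin (d t) (rho / (2 * (f t + 1))))).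
  assert (He1 : eta <= 1) by apply Rmin_l.
  assert (He2 : eta <= d t) by (eapply Rle_trans; [apply Rmin_r | apply Rmin_l]).
  assert (He3 : eta * (2 * (f t + 1)) <= rho).
  { apply Rle_trans with (rho / (2 * (f t + 1)) * (2 * (f t + 1))).
    - apply Rmult_le_compat_r; [lra|].
      eapply Rle_trans; [apply Rmin_r | apply Rmin_r].
    - right; field; lra. }
  assert (Heta : 0 < eta).
  { repeat apply Rmin_glb_lt; try lra; apply Rdiv_lt_0_compat; lra. }
  exists eta; split; [exact Heta|]; intros s Hs; apply Rabs_def2 in Hs.
  assert (Hcell : forall x y, x < y -> x <= t <= y -> y - x < eta ->
            Rabs (F y - F x) < rho).
  { intros x y Hxy Ht Hlen.
    pose proof (saks_henstock_cell f F density_primitive _ _ d _ Hdpos Hacc x t y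
                  ltac:(lra) Hxy Ht ltac:(lra) ltac:(unfold fine_cell; lra)).
    unfold cell_defect in *.
    replace (F y - F x) with (f t * (y - x) - (f t * (y - x) - (F y - F x))) by ring.
    pose proof (Rabs_triang_minus (f t * (y - x)) (f t * (y - x) - (F y - F x)))
      as Htri.
    rewrite (Rabs_right (f t * (y - x))) in Htri by nra; nra. }
  destruct (Rtotal_order s t) as [Hst|[->|Hts]].
  - rewrite Rabs_minus_sym; apply Hcell; lra.
  - rewrite Rminus_eq_0, Rabs_R0; exact Hrho.
  - apply Hcell; lra.
Qed.

End Density.

Section ChangeOfVariables.

Variables f F : R -> R.
Hypothesis Hd : is_density_of f F.

Variables phi Phi : R -> R.
Hypothesis phi_1 : phi 1 = 0.
Hypothesis phi_continuous : forall w, 0 <= w < 1 -> continuity_pt phi w.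
Hypothesis Phi_derive : forall u, 0 < u < 1 -> is_derive Phi u (phi u).
Hypothesis Phi_continuous : forall u, 0 <= u <= 1 -> continuity_pt Phi u.

Let primitive_defect x t y :=
  phi (F t) * (F y - F x) - (Phi (F y) - Phi (F x)).

(* [F] plus a unit jump where [F] reaches 1.  Its increments bound the defect
   of each fine cell: by continuity of [phi] where [F t < 1], and by continuity
   of [Phi] at 1 on the single cell where [F] reaches 1. *)
Let F_jump u := F u + (if Req_dec_T (F u) 1 then 1 else 0).

Lemma F_jump_increment_ge x y : x <= y -> F y - F x <= F_jump y - F_jump x.
Proof.
  intros Hxy; unfold F_jump; pose proof (density_mono f F Hd x y Hxy).
  pose proof (density_le1 f F Hd y).
  destruct (Req_dec_T (F x) 1), (Req_dec_T (F y) 1); lra.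
Qed.

Lemma primitive_defect_top e0 t : 0 < e0 -> F t = 1 -> exists r, 0 < r /\
  forall x y, x < y -> x <= t <= y -> t - r < x ->
    Rabs (primitive_defect x t y) <= e0 * (F_jump y - F_jump x).
Proof.
  intros He0 Ht.
  assert (HPhiF : continuity_pt (fun s => Phi (F s)) t).
  { apply continuity_pt_comp; [apply (density_continuous f F Hd)|].
    rewrite Ht; apply Phi_continuous; lra. }
  destruct (proj1 (continuity_pt_eps _ _) HPhiF e0 He0) as [r [Hr Hclose]].
  exists r; split; [exact Hr|]; intros x y Hxy Hxt Hx.
  pose proof (density_mono f F Hd x t ltac:(lra)).
  pose proof (density_mono f F Hd t y ltac:(lra)).
  pose proof (density_le1 f F Hd y).
  assert (Hy : F y = 1) by lra.
  unfold primitive_defect, F_jump; rewrite Ht, Hy, phi_1.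
  destruct (Req_dec_T 1 1) as [_|]; [|lra].
  destruct (Req_dec_T (F x) 1) as [->|Hx1].
  - replace (0 * (1 - 1) - (Phi 1 - Phi 1)) with 0 by ring; rewrite Rabs_R0; lra.
  - assert (Rabs (Phi (F x) - Phi 1) < e0)
      by (rewrite <- Ht; apply Hclose, Rabs_def1; lra).
    replace (0 * (1 - F x) - (Phi 1 - Phi (F x))) with (Phi (F x) - Phi 1) by ring.
    nra.
Qed.

Lemma primitive_defect_interior e0 t : 0 < e0 -> F t < 1 -> exists r, 0 < r /\
  forall x y, x < y -> x <= t <= y -> t - r < x -> y < t + r ->
    Rabs (primitive_defect x t y) <= e0 * (F_jump y - F_jump x).
Proof.
  intros He0 Ht.
  pose proof (density_ge0 f F Hd t) as Ht0.
  destruct (proj1 (continuity_pt_eps _ _) (phi_continuous (F t) (conj Ht0 Ht)) e0 He0)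
    as [rho [Hrho Hphi]].
  destruct (proj1 (continuity_pt_eps _ _) (density_continuous f F Hd t) rho Hrho)
    as [r [Hr HF]].
  exists r; split; [exact Hr|]; intros x y Hxy Hxt Hx Hy.
  pose proof (F_jump_increment_ge x y ltac:(lra)) as Hjump.
  pose proof (density_mono f F Hd x t ltac:(lra)).
  pose proof (density_mono f F Hd t y ltac:(lra)).
  pose proof (density_ge0 f F Hd x); pose proof (density_le1 f F Hd y).
  assert (HFx : Rabs (F x - F t) < rho) by (apply HF, Rabs_def1; lra).
  assert (HFy : Rabs (F y - F t) < rho) by (apply HF, Rabs_def1; lra).
  apply Rabs_def2 in HFx; apply Rabs_def2 in HFy.
  unfold primitive_defect.
  destruct (Req_dec (F x) (F y)) as [Heq|Hne].
  - rewrite Heq, !Rminus_eq_0, Rmult_0_r, Rminus_eq_0, Rabs_R0; nra.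
  - destruct (MVT_gen Phi (F x) (F y) phi) as [c [Hc Hmvt]];
      rewrite ?Rmin_left, ?Rmax_right in * by lra.
    + intros u Hu; apply Phi_derive; lra.
    + intros u Hu; apply Phi_continuous; lra.
    + assert (Hpc : Rabs (phi c - phi (F t)) < e0) by (apply Hphi, Rabs_def1; lra).
      rewrite Hmvt.
      replace (phi (F t) * (F y - F x) - phi c * (F y - F x))
        with (- ((phi c - phi (F t)) * (F y - F x))) by ring.
      rewrite Rabs_Ropp, Rabs_mult, (Rabs_right (F y - F x)) by lra.
      apply Rle_trans with (e0 * (F y - F x)); [apply Rmult_le_compat_r|]; nra.
Qed.

Lemma primitive_defect_gauge e0 : 0 < e0 -> exists d, (forall t, 0 < d t) /\
  forall x t y, x < y -> x <= t <= y -> fine_cell d x t y ->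
    Rabs (primitive_defect x t y) <= e0 * (F_jump y - F_jump x).
Proof.
  intros He0.
  destruct (functional_choice (fun t r => 0 < r /\
    forall x y, x < y -> x <= t <= y -> t - r < x -> y < t + r ->
      Rabs (primitive_defect x t y) <= e0 * (F_jump y - F_jump x))) as [d Hd'].
  - intros t; destruct (Req_dec (F t) 1) as [Ht|Ht].
    + destruct (primitive_defect_top e0 t He0 Ht) as [r [Hr H]]; eauto.
    + destruct (primitive_defect_interior e0 t He0) as [r [Hr H]]; eauto.
      pose proof (density_le1 f F Hd t); lra.
  - exists d; split; [intros t; apply Hd'|].
    intros x t y Hxy Ht [Hx Hy]; apply Hd'; auto.
Qed.

Lemma change_of_variables a b : a <= b ->
  HK_int (fun x => f x * phi (F x)) a b (Phi (F b) - Phi (F a)).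
Proof.
  intros Hab eps Heps; set (e0 := eps / 5).
  destruct (saks_henstock_weighted f F (density_primitive f F Hd)
              (fun t => phi (F t)) a b e0 Hab ltac:(unfold e0; lra)) as [d1 [Hd1 H1]].
  destruct (primitive_defect_gauge e0 ltac:(unfold e0; lra)) as [d2 [Hd2 H2]].
  exists (fun t => Rmin (d1 t) (d2 t)); split; [intros; apply Rmin_glb_lt; auto|].
  intros l Hl.
  specialize (H1 l (tagged_fine_mono _ _ _ _ _ (fun t => Rmin_l _ _) Hl)).
  apply (tagged_fine_mono _ d2), tagged_fine_chain in Hl; [|intros; apply Rmin_r].
  rewrite rsum_cell_sum, <- (cell_sum_telescope _ (fun u => Phi (F u)) _ _ _ Hl),
    <- cell_sumB.
  rewrite (cell_sum_ext _ _ (fun x t y => phi (F t) * cell_defect f F x t y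
                                        + primitive_defect x t y) _ _ _ Hl)
    by (intros; unfold primitive_defect, cell_defect; ring).
  rewrite cell_sumD.
  assert (Hs1 : Rabs (cell_sum (fun x t y => phi (F t) * cell_defect f F x t y) a l)
                <= 2 * e0).
  { eapply Rle_trans; [apply cell_sum_abs|].
    erewrite cell_sum_ext; [exact H1 | exact Hl | intros; apply Rabs_mult]. }
  assert (Hs2 : Rabs (cell_sum primitive_defect a l) <= e0 * (F_jump b - F_jump a)).
  { eapply Rle_trans; [apply cell_sum_abs|].
    rewrite <- (cell_sum_telescope _ F_jump _ _ _ Hl), <- cell_sumZ.
    exact (cell_sum_le _ _ _ _ _ _ Hl H2). }
  assert (Hjump : F_jump b - F_jump a <= 2).
  { unfold F_jump; pose proof (density_ge0 f F Hd a); pose proof (density_le1 f F Hd b).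
    destruct (Req_dec_T (F a) 1), (Req_dec_T (F b) 1); lra. }
  pose proof (Rabs_triang (cell_sum (fun x t y => phi (F t) * cell_defect f F x t y) a l)
                          (cell_sum primitive_defect a l)).
  unfold e0 in *; nra.
Qed.

Lemma change_of_variables_R :
  HK_int_R (fun x => f x * phi (F x)) (Phi 1 - Phi 0).
Proof.
  split; [intros a b Hab; eexists; apply change_of_variables, Hab|].
  intros eps Heps.
  destruct (proj1 (continuity_pt_eps _ _) (Phi_continuous 1 ltac:(lra)) (eps / 2))
    as [r1 [Hr1 H1]]; [lra|].
  destruct (proj1 (continuity_pt_eps _ _) (Phi_continuous 0 ltac:(lra)) (eps / 2))
    as [r0 [Hr0 H0]]; [lra|].
  destruct (density_tails f F Hd (Rmin r1 r0)) as [M [HM [Hb Ha]]];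
    [apply Rmin_glb_lt; auto|].
  exists M; intros a b J Ha' Hb' HJ.
  rewrite (HK_unique _ a b J _ ltac:(lra) HJ (change_of_variables a b ltac:(lra))).
  specialize (Hb b Hb'); specialize (Ha a Ha').
  pose proof (Rmin_l r1 r0); pose proof (Rmin_r r1 r0).
  pose proof (density_le1 f F Hd b); pose proof (density_ge0 f F Hd a).
  assert (Rabs (Phi (F b) - Phi 1) < eps / 2) by (apply H1, Rabs_def1; lra).
  assert (Rabs (Phi (F a) - Phi 0) < eps / 2) by (apply H0, Rabs_def1; lra).
  replace (Phi (F b) - Phi (F a) - (Phi 1 - Phi 0))
    with ((Phi (F b) - Phi 1) - (Phi (F a) - Phi 0)) by ring.
  pose proof (Rabs_triang_minus (Phi (F b) - Phi 1) (Phi (F a) - Phi 0)); lra.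
Qed.

End ChangeOfVariables.

Definition xlnx (s : R) : R := s * ln s.

Lemma ln_nonpos x : x <= 0 -> ln x = 0.
Proof. intros Hx; unfold ln; destruct (Rlt_dec 0 x); [exfalso; lra | reflexivity]. Qed.

Lemma ln_lt_id w : 0 < w -> ln w < w.
Proof.
  intros Hw; destruct (Rle_dec (ln w) 0) as [|Hlw]; [lra|].
  pose proof (exp_ineq1 (ln w) ltac:(lra)); rewrite exp_ln in * by exact Hw; lra.
Qed.

Lemma xlnx_bound z : 0 < z < 1 -> Rabs (xlnx z) <= 2 * sqrt z.
Proof.
  intros [Hz0 Hz1]; set (y := sqrt z).
  assert (Hy : 0 < y) by (apply sqrt_lt_R0; exact Hz0).
  assert (Hyy : y * y = z) by (apply sqrt_sqrt; lra).
  assert (Hy1 : y < 1) by nra.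
  assert (Hlnz : ln z = 2 * ln y) by (rewrite <- Hyy, ln_mult by exact Hy; ring).
  assert (Hlny : ln y < 0) by (rewrite <- ln_1; apply ln_increasing; lra).
  assert (Hinv : - ln y < / y)
    by (rewrite <- ln_Rinv by exact Hy; apply ln_lt_id, Rinv_0_lt_compat, Hy).
  unfold xlnx; rewrite Hlnz, Rabs_left by nra.
  rewrite <- Hyy.
  assert (y * y * (- ln y) <= y * y * / y) by (apply Rmult_le_compat_l; nra).
  replace (y * y * / y) with y in * by (field; lra); nra.
Qed.

Lemma xlnx_continuous s : continuity_pt xlnx s.
Proof.
  destruct (Rtotal_order s 0) as [Hs|[->|Hs]].
  - apply (continuity_pt_locally_ext (fun _ => 0) xlnx (- s)); [lra | |].
    + intros z Hz; unfold Rdist in Hz; apply Rabs_def2 in Hz.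
      unfold xlnx; rewrite ln_nonpos by lra; ring.
    + apply continuity_pt_const; intros ? ?; reflexivity.
  - apply continuity_pt_eps; intros e He.
    exists (Rmin 1 (e * e / 4)); split.
    { apply Rmin_glb_lt; [lra | apply Rdiv_lt_0_compat; nra]. }
    intros z Hz; rewrite Rminus_0_r in Hz; apply Rabs_def2 in Hz.
    pose proof (Rmin_l 1 (e * e / 4)); pose proof (Rmin_r 1 (e * e / 4)).
    unfold xlnx; rewrite Rmult_0_l, Rminus_0_r.
    destruct (Rle_dec z 0).
    + rewrite ln_nonpos, Rmult_0_r, Rabs_R0 by lra; exact He.
    + eapply Rle_lt_trans; [apply xlnx_bound; lra|].
      enough (sqrt z < e / 2) by lra.
      rewrite <- (sqrt_Rsqr (e / 2)) by lra; apply sqrt_lt_1_alt.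
      unfold Rsqr; lra.
  - apply derivable_continuous_pt, derivable_pt_mult; [apply derivable_pt_id|].
    exists (/ s); apply derivable_pt_lim_ln, Hs.
Qed.

Lemma INR_add_sub p q : INR (p + q) - INR p = INR q.
Proof. rewrite plus_INR; ring. Qed.

Lemma continuity_pt_of_ex_derive (g : R -> R) x : ex_derive g x -> continuity_pt g x.
Proof.
  intros H; apply continuity_pt_filterlim; apply ex_derive_continuous in H; exact H.
Qed.

(* With [j = S m] and [k - j = S n], [kl_integrand g_jk g_j = f * (phi_jk_j o F)]
   and [kl_integrand g_j g_jk = f * (phi_j_jk o F)].  Where [F x = 1] the latter
   is [g_j * ln (g_j / 0)], which is 0 since [/ 0 = 0] and [ln 0 = 0]. *)
Section Profiles.

Variables m n : nat.

Definition phi_jk_j (u : R) : R :=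
  INR (S m) * INR (S m + S n) / INR (S n) * u ^ m *
  ((1 - u ^ S n) * ln (INR (S m + S n) / INR (S n)) + xlnx (1 - u ^ S n)).

Definition phi_j_jk (u : R) : R :=
  if Req_dec_T u 1 then 0 else
  INR (S m) * u ^ m * (ln (INR (S n) / INR (S m + S n)) - ln (1 - u ^ S n)).

Definition Phi_jk_j (u : R) : R := RInt phi_jk_j 0 u.

Definition Phi_sum (u : R) : R :=
  INR (S m) / INR (S n) *
    ((u ^ S m - u ^ (S m + S n)) * ln (INR (S m + S n) / INR (S n))
     + u ^ S m * xlnx (1 - u ^ S n))
  + INR (S m) / INR (S m + S n) * u ^ (S m + S n).

Definition Phi_j_jk (u : R) : R := Phi_sum u - Phi_jk_j u.

Lemma phi_jk_j_continuous u : continuity_pt phi_jk_j u.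
Proof.
  unfold phi_jk_j; apply continuity_pt_mult;
    [apply continuity_pt_of_ex_derive; auto_derive; auto|].
  apply continuity_pt_plus; [apply continuity_pt_of_ex_derive; auto_derive; auto|].
  apply (continuity_pt_comp (fun u => 1 - u ^ S n) xlnx);
    [apply continuity_pt_of_ex_derive; auto_derive; auto | apply xlnx_continuous].
Qed.

Lemma phi_jk_j_1 : phi_jk_j 1 = 0.
Proof. unfold phi_jk_j, xlnx; rewrite !pow1, Rminus_eq_0; ring. Qed.

Lemma Phi_jk_j_derive u : is_derive Phi_jk_j u (phi_jk_j u).
Proof.
  assert (Hcont : forall z, continuous phi_jk_j z)
    by (intros z; apply continuity_pt_filterlim, phi_jk_j_continuous).
  apply is_derive_RInt with (a := 0); [|apply Hcont].
  apply filter_forall; intros x; apply (@RInt_correct R_CompleteNormedModule).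
  apply (@ex_RInt_continuous R_CompleteNormedModule); intros; apply Hcont.
Qed.

Lemma Phi_jk_j_continuous u : continuity_pt Phi_jk_j u.
Proof. apply continuity_pt_of_ex_derive; eexists; apply Phi_jk_j_derive. Qed.

Lemma Phi_sum_continuous u : continuity_pt Phi_sum u.
Proof.
  unfold Phi_sum.
  apply continuity_pt_plus; [|apply continuity_pt_of_ex_derive; auto_derive; auto].
  apply continuity_pt_mult; [apply continuity_pt_const; intros ? ?; reflexivity|].
  apply continuity_pt_plus; [apply continuity_pt_of_ex_derive; auto_derive; auto|].
  apply continuity_pt_mult; [apply continuity_pt_of_ex_derive; auto_derive; auto|].
  apply (continuity_pt_comp (fun u => 1 - u ^ S n) xlnx);
    [apply continuity_pt_of_ex_derive; auto_derive; auto | apply xlnx_continuous].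
Qed.

Lemma Phi_sum_derive u : 0 < u < 1 ->
  is_derive Phi_sum u (phi_jk_j u + phi_j_jk u).
Proof.
  intros Hu.
  assert (Hs : 0 < 1 - u ^ S n)
    by (pose proof (pow_lt_1_compat u (S n) ltac:(lra) ltac:(lia)); lra).
  unfold Phi_sum, phi_jk_j, phi_j_jk, xlnx.
  destruct (Req_dec_T u 1); [lra|].
  auto_derive.
  - simpl in Hs; lra.
  - change (match m with 0%nat => 1 | S _ => INR m + 1 end) with (INR (S m)).
    change (match n with 0%nat => 1 | S _ => INR n + 1 end) with (INR (S n)).
    change (match (m + S n)%nat with 0%nat => 1 | S _ => INR (m + S n) + 1 end)
      with (INR (S m + S n)).
    pose proof (lt_0_INR (S n) ltac:(lia)); pose proof (lt_0_INR (S m + S n) ltac:(lia)).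
    rewrite !ln_div, pow_add by lra.
    rewrite !plus_INR in *; simpl pow in *.
    replace (1 + - (u * u ^ n)) with (1 - u * u ^ n) by ring.
    field; lra.
Qed.

Lemma Phi_sum_increment : Phi_sum 1 - Phi_sum 0 = INR (S m) / INR (S m + S n).
Proof.
  unfold Phi_sum, xlnx; rewrite !pow1, !pow_i, Rminus_eq_0 by lia.
  pose proof (lt_0_INR (S n) ltac:(lia)); pose proof (lt_0_INR (S m + S n) ltac:(lia)).
  field; lra.
Qed.

Lemma phi_j_jk_1 : phi_j_jk 1 = 0.
Proof. unfold phi_j_jk; destruct (Req_dec_T 1 1); [reflexivity | lra]. Qed.

Lemma phi_j_jk_continuous w : 0 <= w < 1 -> continuity_pt phi_j_jk w.
Proof.
  intros Hw.
  assert (Hs : w ^ S n < 1) by apply (pow_lt_1_compat w (S n) Hw ltac:(lia)).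
  apply (continuity_pt_locally_ext (fun u =>
           INR (S m) * u ^ m * (ln (INR (S n) / INR (S m + S n)) - ln (1 - u ^ S n)))
           _ (1 - w)); [lra | |].
  - intros u Hu; unfold Rdist in Hu; apply Rabs_def2 in Hu; unfold phi_j_jk.
    destruct (Req_dec_T u 1); [lra | reflexivity].
  - apply continuity_pt_of_ex_derive; auto_derive; simpl in Hs; lra.
Qed.

Lemma Phi_j_jk_derive u : 0 < u < 1 -> is_derive Phi_j_jk u (phi_j_jk u).
Proof.
  intros Hu.
  replace (phi_j_jk u) with ((phi_jk_j u + phi_j_jk u) - phi_jk_j u) by ring.
  apply (@is_derive_minus R_AbsRing R_NormedModule);
    [apply Phi_sum_derive, Hu | apply Phi_jk_j_derive].
Qed.

Lemma Phi_j_jk_continuous u : continuity_pt Phi_j_jk u.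
Proof.
  apply continuity_pt_minus; [apply Phi_sum_continuous | apply Phi_jk_j_continuous].
Qed.

End Profiles.

Lemma pow_le_1 u p : 0 <= u <= 1 -> u ^ p <= 1.
Proof. intros Hu; rewrite <- (pow1 p); apply pow_incr; lra. Qed.

Lemma kl_integrand_jk_j f F m n x : 0 <= f x -> 0 <= F x <= 1 ->
  kl_integrand (g_jk f F (S m) (S m + S n)) (g_j f F (S m)) x
  = f x * phi_jk_j m n (F x).
Proof.
  intros Hf HF; unfold kl_integrand, g_jk, g_j, phi_jk_j, xlnx.
  replace (S m - 1)%nat with m by lia.
  replace (S m + S n - 1)%nat with (m + S n)%nat by lia.
  rewrite pow_add, INR_add_sub.
  set (U := F x ^ m); set (V := F x ^ S n).
  set (L := ln (INR (S m + S n) / INR (S n))).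
  set (C := INR (S m) * INR (S m + S n) / INR (S n)).
  pose proof (lt_0_INR (S m) ltac:(lia)); pose proof (lt_0_INR (S n) ltac:(lia)).
  pose proof (lt_0_INR (S m + S n) ltac:(lia)).
  assert (HU : 0 <= U) by (apply pow_le; lra).
  assert (HV : V <= 1) by (apply pow_le_1; exact HF).
  assert (HC : 0 < C) by (apply Rdiv_lt_0_compat; nra).
  destruct (Req_dec_T (C * f x * (U - U * V)) 0) as [Hz|Hnz].
  - assert (Hz' : f x * (U - U * V) = 0).
    { apply Rmult_eq_reg_l with C; [|lra]; rewrite Rmult_0_r, <- Hz; ring. }
    transitivity (C * (f x * (U - U * V)) * (L + ln (1 - V))); [rewrite Hz'|]; ring.
  - assert (f x <> 0) by (intros Hf0; apply Hnz; rewrite Hf0; ring).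
    assert (U <> 0) by (intros HU0; apply Hnz; rewrite HU0; ring).
    assert (1 - V <> 0) by (intros HV1; apply Hnz;
      replace (U - U * V) with (U * (1 - V)) by ring; rewrite HV1; ring).
    replace (C * f x * (U - U * V) / (INR (S m) * f x * U))
      with (INR (S m + S n) / INR (S n) * (1 - V)) by (unfold C; field; lra).
    rewrite ln_mult by (try apply Rdiv_lt_0_compat; lra).
    fold L; unfold C; field; lra.
Qed.

Lemma kl_integrand_j_jk f F m n x : 0 <= f x -> 0 <= F x <= 1 ->
  kl_integrand (g_j f F (S m)) (g_jk f F (S m) (S m + S n)) x
  = f x * phi_j_jk m n (F x).
Proof.
  intros Hf HF; unfold kl_integrand, g_jk, g_j, phi_j_jk.
  replace (S m - 1)%nat with m by lia.
  replace (S m + S n - 1)%nat with (m + S n)%nat by lia.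
  rewrite pow_add, INR_add_sub.
  set (U := F x ^ m); set (V := F x ^ S n).
  set (C := INR (S m) * INR (S m + S n) / INR (S n)).
  pose proof (lt_0_INR (S m) ltac:(lia)); pose proof (lt_0_INR (S n) ltac:(lia)).
  pose proof (lt_0_INR (S m + S n) ltac:(lia)).
  destruct (Req_dec_T (INR (S m) * f x * U) 0) as [Hz|Hnz].
  - assert (Hz' : f x * U = 0).
    { apply Rmult_eq_reg_l with (INR (S m)); [|lra]; rewrite Rmult_0_r, <- Hz; ring. }
    destruct (Req_dec_T (F x) 1); [ring|].
    transitivity (INR (S m) * (f x * U)
                  * (ln (INR (S n) / INR (S m + S n)) - ln (1 - V)));
      [rewrite Hz'|]; ring.
  - assert (f x <> 0) by (intros Hf0; apply Hnz; rewrite Hf0; ring).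
    assert (U <> 0) by (intros HU0; apply Hnz; rewrite HU0; ring).
    destruct (Req_dec_T (F x) 1) as [Htop|Htop].
    + unfold V; rewrite Htop, pow1.
      replace (C * f x * (U - U * 1)) with 0 by ring.
      unfold Rdiv; rewrite Rinv_0, Rmult_0_r, ln_nonpos by lra; ring.
    + assert (HV : V < 1) by apply (pow_lt_1_compat (F x) (S n) ltac:(lra) ltac:(lia)).
      assert (HC : 0 < C) by (apply Rdiv_lt_0_compat; nra).
      replace (INR (S m) * f x * U / (C * f x * (U - U * V)))
        with (INR (S n) / INR (S m + S n) / (1 - V)).
      * rewrite ln_div by (try apply Rdiv_lt_0_compat; lra); ring.
      * unfold C; field; repeat split; try lra.
        replace (U - U * V) with (U * (1 - V)) by ring.
        apply Rmult_integral_contrapositive; split; lra.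
Qed.

Theorem proposition5 (f F : R -> R) (j k : nat)
  (Hdens : is_density_of f F) (Hj : (1 <= j)%nat) (Hjk : (j < k)%nat) :
  KL_dist (g_jk f F j k) (g_j f F j) (INR j / INR k).
Proof.
  destruct j as [|m]; [lia|].
  assert (Hk : exists n, k = (S m + S n)%nat) by (exists (k - S m - 1)%nat; lia).
  destruct Hk as [n ->].
  assert (Hrange : forall x, 0 <= f x /\ 0 <= F x <= 1).
  { intros x; split; [apply (proj1 Hdens)|].
    split; [apply (density_ge0 f F Hdens) | apply (density_le1 f F Hdens)]. }
  exists (Phi_jk_j m n 1 - Phi_jk_j m n 0), (Phi_j_jk m n 1 - Phi_j_jk m n 0).
  split; [|split].
  - unfold KL_div.
    replace (kl_integrand _ _) with (fun x => f x * phi_jk_j m n (F x))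
      by (apply functional_extensionality; intros x; symmetry;
          apply kl_integrand_jk_j; apply Hrange).
    apply change_of_variables_R; auto using phi_jk_j_1.
    + intros w _; apply phi_jk_j_continuous.
    + intros u _; apply Phi_jk_j_derive.
    + intros u _; apply Phi_jk_j_continuous.
  - unfold KL_div.
    replace (kl_integrand _ _) with (fun x => f x * phi_j_jk m n (F x))
      by (apply functional_extensionality; intros x; symmetry;
          apply kl_integrand_j_jk; apply Hrange).
    apply change_of_variables_R; auto using phi_j_jk_1, phi_j_jk_continuous,
      Phi_j_jk_derive, Phi_j_jk_continuous.
  - unfold Phi_j_jk; rewrite <- Phi_sum_increment; ring.
Qed.
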